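(* Let $k>0$, let $Q\subset\mathbb{R}^2$ be a bounded open set with smooth boundary and connected exterior, let $\theta_1,\dots,\theta_N\in\mathbb{S}^1$, and let $u^\infty_{\theta_1},\dots,u^\infty_{\theta_N}\in L^2(\mathbb{S}^1)$ be given data. Let $R:L^2(\mathbb{S}^1)\to L^2(\mathbb{S}^1)$ be a bounded, self-adjoint, positive definite, invertible linear operator. Let $q_0\in L^2(Q)$ be an initial guess and $\{\alpha_i\}_{i\in\mathbb{N}_0}$ a sequence of positive regularization parameters. Define the Full data Levenberg–Marquardt (FLM) iterates by $q^{FLM}_0:=q_0$ and, for $i\in\mathbb{N}_0$, $$q^{FLM}_{i+1}=q^{FLM}_i+\Big(\alpha_i I+\vec{\mathcal{F}}'[q^{FLM}_i]^H R^{-1}\vec{\mathcal{F}}'[q^{FLM}_i]\Big)^{-1}\vec{\mathcal{F}}'[q^{FLM}_i]^H R^{-1}\Big(\vec u^\infty-\vec{\mathcal{F}}q^{FLM}_i\Big),$$ where $\vec u^\infty:=(u^\infty_{\theta_1},\dots,u^\infty_{\theta_N})$, $\vec{\mathcal{F}}q:=(\mathcal{F}_{\theta_1}q,\dots,\mathcal{F}_{\theta_N}q)$, $\vec{\mathcal{F}}'[q]m:=(\mathcal{F}'_{\theta_1}[q]m,\dots,\mathcal{F}'_{\theta_N}[q]m)$, and $R^{-1}$ acts componentwise on $L^2(\mathbb{S}^1)^N$. Define the Kalman filter Levenberg–Marquardt (KFL) iterates as follows: $q^{KFL}_{0,0}:=q_0$; for $i\ge 1$, $q^{KFL}_{i,0}:=q^{KFL}_{i-1,N}$;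 for every $i\in\mathbb{N}_0$, $B_{i,0}:=\frac{1}{\alpha_i}I$, and for $n=1,\dots,N$, $$K_{i,n}:=B_{i,n-1}\mathcal{F}'_{\theta_n}[q^{KFL}_{i,0}]^H\Big(R+\mathcal{F}'_{\theta_n}[q^{KFL}_{i,0}]B_{i,n-1}\mathcal{F}'_{\theta_n}[q^{KFL}_{i,0}]^H\Big)^{-1},$$ $$q^{KFL}_{i,n}:=q^{KFL}_{i,n-1}+K_{i,n}\Big(u^\infty_{\theta_n}-\mathcal{F}_{\theta_n}q^{KFL}_{i,0}+\mathcal{F}'_{\theta_n}[q^{KFL}_{i,0}]q^{KFL}_{i,0}-\mathcal{F}'_{\theta_n}[q^{KFL}_{i,0}]q^{KFL}_{i,n-1}\Big),$$ $$B_{i,n}:=\Big(I-K_{i,n}\mathcal{F}'_{\theta_n}[q^{KFL}_{i,0}]\Big)B_{i,n-1}.$$ Then, for all $i\in\mathbb{N}_0$ (with both iterations well defined, i.e. the relevant iterates lie in the domain where the Fréchet derivatives exist), $q^{KFL}_{i,N}=q^{FLM}_{i+1}$.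
   Context: For an incident direction $\theta\in\mathbb{S}^1$, the plane wave is $u^{inc}(x,\theta)=e^{ikx\cdot\theta}$. For $q\in L^\infty(Q)$ (extended by zero outside $Q$), $u_q(\cdot,\theta)$ denotes the solution of the Lippmann–Schwinger equation $u(x,\theta)=u^{inc}(x,\theta)+k^2\int_Q q(y)u(y,\theta)\Phi(x,y)\,dy$, where $\Phi(x,y)=\frac{i}{4}H^{(1)}_0(k|x-y|)$ is the fundamental solution of the Helmholtz equation in $\mathbb{R}^2$. The far-field mapping is $\mathcal{F}_\theta q(\hat x):=\frac{k^2e^{i\pi/4}}{\sqrt{8\pi k}}\int_Q e^{-ik\hat x\cdot y}u_q(y,\theta)q(y)\,dy$, $\hat x\in\mathbb{S}^1$. On $L^\infty_+(Q):=\{q\in L^\infty(Q):\exists q_0>0,\ \mathrm{Im}\,q\ge q_0\text{ a.e. on }Q\}\subset L^2(Q)$, $\mathcal{F}_\theta$ is Fréchet differentiable as a map into $L^2(\mathbb{S}^1)$, with derivative $\mathcal{F}'_\theta[q]:L^2(Q)\to L^2(\mathbb{S}^1)$ given by $\mathcal{F}'_\theta[q]m=v^\infty_{q,m}$, the far-field pattern of the radiating solution $v$ of $\Delta v+k^2(1+q)v=-k^2 m\,u_q(\cdot,\theta)$ in $\mathbb{R}^2$. The superscript $H$ denotes the Hilbert-space adjoint with respect to the standard $L^2$ inner products of $L^2(Q)$, $L^2(\mathbb{S}^1)$ and $L^2(\mathbb{S}^1)^N$. *)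

From HB Require Import structures.
From Stdlib Require Import ClassicalEpsilon.
From mathcomp Require Import all_boot all_order all_algebra.
Set Implicit Arguments. Unset Strict Implicit. Unset Printing Implicit Defensive.
Import Order.TTheory GRing.Theory Num.Theory.
Local Open Scope ring_scope.

Section Defs.
Variable K : numClosedFieldType.

Definition lin (U V : lmodType K) (f : U -> V) : Prop :=
  forall (a : K) (x y : U), f (a *: x + y) = a *: f x + f y.

Definition inner_product (V : lmodType K) (ip : V -> V -> K) : Prop :=
  [/\ forall (a : K) (u v w : V), ip (a *: u + v) w = a * ip u w + ip v w,
      forall u v : V, ip u v = Num.conj (ip v u),
      forall u : V, 0 <= ip u u &
      forall u : V, ip u u = 0 -> u = 0].

Definition is_adjoint (U V : lmodType K) (ipU : U -> U -> K) (ipV : V -> V -> K)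
  (A : U -> V) (AH : V -> U) : Prop :=
  forall (x : U) (y : V), ipV (A x) y = ipU x (AH y).

(* the adjoint A^H (chosen; unique when it exists) *)
Definition adj (U V : lmodType K) (ipU : U -> U -> K) (ipV : V -> V -> K)
  (A : U -> V) : V -> U :=
  epsilon (inhabits (fun _ : V => (0 : U))) (fun AH => is_adjoint ipU ipV A AH).

(* the (two-sided) inverse operator f^{-1} (chosen; unique when it exists) *)
Definition inv_op (U V : lmodType K) (f : U -> V) : V -> U :=
  epsilon (inhabits (fun _ : V => (0 : U))) (fun g => cancel f g /\ cancel g f).

Definition ipN (Y : lmodType K) (N : nat) (ipY : Y -> Y -> K)
  (v w : {ffun 'I_N -> Y}) : K := \sum_(j < N) ipY (v j) (w j).

Variables (X Y : lmodType K) (ipX : X -> X -> K) (ipY : Y -> Y -> K).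
Variable Th : Type.                        (* incident directions *)
Variable F : Th -> X -> Y.
Variable F' : Th -> X -> X -> Y.           (* q, m |-> F'_theta[q] m *)
Variable R : Y -> Y.
Variable N : nat.
Variable th : nat -> Th.                   (* theta_1, ..., theta_N = th 1 .. th N *)
Variable u : nat -> Y.                     (* u^infty_{theta_n} = u n, n = 1..N *)

(* component j : 'I_N of the product space corresponds to theta_{j+1} *)
Definition Fvec (q : X) : {ffun 'I_N -> Y} := [ffun j : 'I_N => F (th j.+1) q].
Definition F'vec (q : X) (m : X) : {ffun 'I_N -> Y} :=
  [ffun j : 'I_N => F' (th j.+1) q m].
Definition uvec : {ffun 'I_N -> Y} := [ffun j : 'I_N => u j.+1].
Definition RinvN (v : {ffun 'I_N -> Y}) : {ffun 'I_N -> Y} :=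
  [ffun j => inv_op R (v j)].

Definition flm_normal_op (a : K) (q : X) : X -> X :=
  fun m => a *: m + adj ipX (ipN ipY) (F'vec q) (RinvN (F'vec q m)).

Definition flm_step (a : K) (q : X) : X :=
  q + inv_op (flm_normal_op a q)
        (adj ipX (ipN ipY) (F'vec q) (RinvN (uvec - Fvec q))).

Fixpoint flm (q0 : X) (alpha : nat -> K) (i : nat) : X :=
  match i with
  | 0 => q0
  | i'.+1 => flm_step (alpha i') (flm q0 alpha i')
  end.

Definition kfl_S (qi0 : X) (n : nat) (B : X -> X) : Y -> Y :=
  fun y => R y + F' (th n) qi0 (B (adj ipX ipY (F' (th n) qi0) y)).

Definition kfl_gain (qi0 : X) (n : nat) (B : X -> X) : Y -> X :=
  fun y => B (adj ipX ipY (F' (th n) qi0) (inv_op (kfl_S qi0 n B) y)).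

(* (q_{i,n}, B_{i,n}) for the outer step with starting point qi0 = q_{i,0} *)
Fixpoint kfl_inner (qi0 : X) (a : K) (n : nat) : X * (X -> X) :=
  match n with
  | 0 => (qi0, fun m => a^-1 *: m)
  | n'.+1 =>
      let: (q, B) := kfl_inner qi0 a n' in
      let Kn := kfl_gain qi0 n'.+1 B in
      let A := F' (th n'.+1) qi0 in
      (q + Kn (u n'.+1 - F (th n'.+1) qi0 + A qi0 - A q),
       fun m => B m - Kn (A (B m)))
  end.

Fixpoint kfl_start (q0 : X) (alpha : nat -> K) (i : nat) : X :=
  match i with
  | 0 => q0
  | i'.+1 => (kfl_inner (kfl_start q0 alpha i') (alpha i') N).1
  end.

Definition kfl (q0 : X) (alpha : nat -> K) (i n : nat) : X :=
  (kfl_inner (kfl_start q0 alpha i) (alpha i) n).1.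

Definition kfl_B (q0 : X) (alpha : nat -> K) (i n : nat) : X -> X :=
  (kfl_inner (kfl_start q0 alpha i) (alpha i) n).2.

End Defs.

(* Fix an outer step i, write A_n := F'_{theta_n}[q_{i,0}] and
   M_n := alpha_i I + sum_{j <= n} A_j^H R^-1 A_j.  By induction on n, the
   covariance B_{i,n} is a right inverse of M_n and
   q_{i,n} = q_{i,0} + B_{i,n} (sum_{j <= n} A_j^H R^-1 (u_j - F_{theta_j} q_{i,0})):
   the step n -> n+1 is the Sherman-Morrison-Woodbury identity, driven by
   K_{i,n} (R y + A_n B_{i,n-1} A_n^H y) = B_{i,n-1} A_n^H y.  For n = N, M_N is
   the normal operator of the FLM step and the sum is its right-hand side, so
   q_{i,N} is the FLM update of q_{i,0}, and induction on i identifies the outer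
   iterates. *)

From HB Require Import structures.
From Stdlib Require Import ClassicalEpsilon.
From mathcomp Require Import all_boot all_order all_algebra.
Import Order.TTheory GRing.Theory Num.Theory.
Set Implicit Arguments. Unset Strict Implicit. Unset Printing Implicit Defensive.
Local Open Scope ring_scope.

Section LinearMaps.
Variables (K : numClosedFieldType) (U V W : lmodType K).

Lemma linD (f : U -> V) : lin f -> {morph f : x y / x + y}.
Proof. by move=> hf x y; rewrite -[x in LHS]scale1r hf scale1r. Qed.

Lemma lin0 (f : U -> V) : lin f -> f 0 = 0.
Proof. by move=> hf; apply: (addrI (f 0)); rewrite -linD // !addr0. Qed.

Lemma linN (f : U -> V) : lin f -> {morph f : x / - x}.
Proof. by move=> hf x; apply: (addrI (f x)); rewrite -linD // !subrr lin0. Qed.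

Lemma linB (f : U -> V) : lin f -> {morph f : x y / x - y}.
Proof. by move=> hf x y; rewrite linD // linN. Qed.

Lemma lin_comp (f : V -> W) (g : U -> V) : lin f -> lin g -> lin (fun x => f (g x)).
Proof. by move=> hf hg a x y; rewrite hg hf. Qed.

Lemma lin_add (f g : U -> V) : lin f -> lin g -> lin (fun x => f x + g x).
Proof. by move=> hf hg a x y; rewrite hf hg scalerDr addrACA. Qed.

Lemma lin_sub (f g : U -> V) : lin f -> lin g -> lin (fun x => f x - g x).
Proof. by move=> hf hg a x y; rewrite hf hg scalerBr opprD addrACA. Qed.

Lemma lin_scale (c : K) : lin (fun x : U => c *: x).
Proof. by move=> a x y; rewrite scalerDr !scalerA mulrC. Qed.

Lemma lin_sum n (f : 'I_n -> U -> V) :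
  (forall j, lin (f j)) -> lin (fun x => \sum_(j < n) f j x).
Proof.
by move=> hf a x y; rewrite scaler_sumr -big_split; apply: eq_bigr => j _; apply: hf.
Qed.

Lemma inv_opK (f : U -> V) : bijective f -> cancel f (inv_op f).
Proof.
case=> g fK gK.
by case: (epsilon_spec (inhabits (fun _ : V => 0 : U))
            (fun h => cancel f h /\ cancel h f) (ex_intro _ g (conj fK gK))).
Qed.

Lemma inv_opKV (f : U -> V) : bijective f -> cancel (inv_op f) f.
Proof. by move=> hf; apply/(bij_can_sym hf)/inv_opK. Qed.

Lemma lin_inv_op (f : U -> V) : lin f -> bijective f -> lin (inv_op f).
Proof.
move=> hf fB a x y; apply: (bij_inj fB).
by rewrite hf !inv_opKV.
Qed.

Lemma inv_op_rinv (f : U -> V) (g : V -> U) : bijective f -> cancel g f -> inv_op f =1 g.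
Proof. by move=> fB gK y; rewrite -{1}[y]gK inv_opK. Qed.

End LinearMaps.

Section InnerProduct.
Variables (K : numClosedFieldType) (V : lmodType K) (ip : V -> V -> K).
Hypothesis ipP : inner_product ip.

Lemma ipZDl a u v w : ip (a *: u + v) w = a * ip u w + ip v w.
Proof. by case: ipP. Qed.

Lemma ipC u v : ip u v = (ip v u)^*.
Proof. by case: ipP. Qed.

Lemma ip_eq0 u : ip u u = 0 -> u = 0.
Proof. by case: ipP => _ _ _; apply. Qed.

Lemma ip0l w : ip 0 w = 0.
Proof. by have := ipZDl (-1) w w w; rewrite scaleN1r addNr mulN1r addNr. Qed.

Lemma ipZDr w a u v : ip w (a *: u + v) = a^* * ip w u + ip w v.
Proof. by rewrite ipC ipZDl rmorphD rmorphM /= -!ipC. Qed.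

Lemma ip0r w : ip w 0 = 0.
Proof. by rewrite ipC ip0l rmorph0. Qed.

Lemma ipDr w u v : ip w (u + v) = ip w u + ip w v.
Proof. by rewrite -[u]scale1r ipZDr rmorph1 mul1r scale1r. Qed.

Lemma ip_sumr w n (G : 'I_n -> V) : ip w (\sum_(j < n) G j) = \sum_(j < n) ip w (G j).
Proof.
apply: (big_rec2 (fun s t => ip w s = t)) => [|j s t _ <-]; first exact: ip0r.
exact: ipDr.
Qed.

Lemma ip_sepr v v' : (forall x, ip x v = ip x v') -> v = v'.
Proof.
move=> eq_ip; apply/eqP; rewrite -subr_eq0; apply/eqP/ip_eq0.
have -> : v - v' = (-1) *: v' + v by rewrite scaleN1r addrC.
by rewrite ipZDr eq_ip rmorphN1 mulN1r addNr.
Qed.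

End InnerProduct.

Section Adjoint.
Variables (K : numClosedFieldType) (U V : lmodType K).
Variables (ipU : U -> U -> K) (ipV : V -> V -> K).
Hypotheses (ipUP : inner_product ipU) (ipVP : inner_product ipV).

Lemma adjP (A : U -> V) :
  (exists AH, is_adjoint ipU ipV A AH) -> is_adjoint ipU ipV A (adj ipU ipV A).
Proof. exact: epsilon_spec. Qed.

Lemma adj_unique (A : U -> V) AH : is_adjoint ipU ipV A AH -> adj ipU ipV A =1 AH.
Proof.
by move=> AHP y; apply: (ip_sepr ipUP) => x; rewrite -(adjP (ex_intro _ _ AHP)) AHP.
Qed.

Lemma lin_adjoint (A : U -> V) AH : is_adjoint ipU ipV A AH -> lin AH.
Proof.
move=> AHP a y z; apply: (ip_sepr ipUP) => x.
by rewrite -AHP (ipZDr ipVP) (ipZDr ipUP) !AHP.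
Qed.

Lemma is_adjoint_stack n (A : 'I_n -> U -> V) (AH : 'I_n -> V -> U) :
  (forall j, is_adjoint ipU ipV (A j) (AH j)) ->
  is_adjoint ipU (ipN ipV) (fun x => [ffun j => A j x])
                          (fun v => \sum_(j < n) AH j (v j)).
Proof.
move=> AHP x v; rewrite /ipN (ip_sumr ipUP); apply: eq_bigr => j _.
by rewrite ffunE AHP.
Qed.

End Adjoint.

Section KalmanUpdate.
Variables (K : numClosedFieldType) (X Y : lmodType K).
Variables (A : X -> Y) (AH : Y -> X) (R : Y -> Y) (B : X -> X).
Hypotheses (A_lin : lin A) (AH_lin : lin AH) (R_lin : lin R) (B_lin : lin B).
Hypothesis R_bij : bijective R.

Let S y := R y + A (B (AH y)).
Let gain y := B (AH (inv_op S y)).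
Let B' m := B m - gain (A (B m)).

Hypothesis S_bij : bijective S.

Lemma lin_kalman_gain : lin gain.
Proof.
apply/lin_comp/lin_comp/lin_inv_op => //.
exact/lin_add/lin_comp/lin_comp.
Qed.

Lemma lin_kalman_cov : lin B'.
Proof. exact/lin_sub/lin_comp/lin_comp/B_lin/A_lin/lin_kalman_gain. Qed.

Lemma kalman_gain_correction c :
  gain c = B (AH (inv_op R c)) - gain (A (B (AH (inv_op R c)))).
Proof.
have gainS : gain (S (inv_op R c)) = B (AH (inv_op R c)).
  by rewrite /gain (inv_opK S_bij).
rewrite /S (inv_opKV R_bij) (linD lin_kalman_gain) in gainS.
by rewrite -{1}gainS addrK.
Qed.

Lemma kalman_cov_rinv (M : X -> X) : lin M -> cancel B M ->
  cancel B' (fun m => M m + AH (inv_op R (A m))).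
Proof.
move=> M_lin BK x.
have A_gain y : A (gain y) = y - R (inv_op S y).
  by rewrite -{2}[y](inv_opKV S_bij) /S [R _ + _]addrC addrK.
by rewrite /B' (linB M_lin) !BK (linB A_lin) A_gain subKr (inv_opK R_bij) subrK.
Qed.

Lemma kalman_mean_update q g c :
  (q + B g) + gain (c + A q - A (q + B g)) = q + B' (g + AH (inv_op R c)).
Proof.
have gainL := lin_kalman_gain.
rewrite (linD A_lin) addrKA (linB gainL) kalman_gain_correction (linD lin_kalman_cov).
rewrite -addrA /B'; congr (_ + _).
by rewrite [RHS]addrAC -[RHS]addrA.
Qed.

End KalmanUpdate.

Section KflInner.
Variables (K : numClosedFieldType) (X Y : lmodType K).
Variables (ipX : X -> X -> K) (ipY : Y -> Y -> K).
Variables (Th : Type) (F : Th -> X -> Y) (F' : Th -> X -> X -> Y).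
Variables (R : Y -> Y) (th : nat -> Th) (u : nat -> Y).
Hypotheses (ipXP : inner_product ipX) (ipYP : inner_product ipY).
Hypotheses (R_lin : lin R) (R_bij : bijective R).
Hypotheses (F'_lin : forall t q, lin (F' t q))
           (F'_adj : forall t q, exists AH, is_adjoint ipX ipY (F' t q) AH).
Variables (q : X) (a : K).
Hypothesis a_neq0 : a != 0.

Local Notation A n := (F' (th n) q).
Local Notation AH n := (adj ipX ipY (F' (th n) q)).

Lemma lin_adj_F' n : lin (AH n).
Proof. by apply: (lin_adjoint ipXP ipYP); apply/adjP/F'_adj. Qed.

Definition partial_normal_op n m :=
  a *: m + \sum_(j < n) AH j.+1 (inv_op R (A j.+1 m)).

Definition partial_normal_rhs n :=
  \sum_(j < n) AH j.+1 (inv_op R (u j.+1 - F (th j.+1) q)).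

Lemma lin_partial_normal_op n : lin (partial_normal_op n).
Proof.
apply/lin_add/lin_sum => [|j]; first exact: lin_scale.
exact/lin_comp/lin_comp/F'_lin/(lin_inv_op R_lin R_bij)/lin_adj_F'.
Qed.

Lemma partial_normal_opS n m :
  partial_normal_op n.+1 m = partial_normal_op n m + AH n.+1 (inv_op R (A n.+1 m)).
Proof. by rewrite /partial_normal_op big_ord_recr addrA. Qed.

Lemma partial_normal_rhsS n :
  partial_normal_rhs n.+1 =
  partial_normal_rhs n + AH n.+1 (inv_op R (u n.+1 - F (th n.+1) q)).
Proof. by rewrite /partial_normal_rhs big_ord_recr. Qed.

Variable N : nat.
Hypothesis S_bij : forall n, (0 < n <= N)%N ->
  bijective (kfl_S ipX ipY F' R th q n (kfl_inner ipX ipY F F' R th u q a n.-1).2).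

Lemma kfl_inner_invariant n : (n <= N)%N ->
  let: (qn, B) := kfl_inner ipX ipY F F' R th u q a n in
  [/\ lin B, cancel B (partial_normal_op n) & qn = q + B (partial_normal_rhs n)].
Proof.
elim: n => [_ | n IH lt_nN] /=.
  split; first exact: lin_scale.
    by move=> x; rewrite /partial_normal_op big_ord0 addr0 scalerA mulfV ?scale1r.
  by rewrite /partial_normal_rhs big_ord0 scaler0 addr0.
move: (IH (ltnW lt_nN)) (@S_bij n.+1 lt_nN).
case: kfl_inner => qn B /= [B_lin BK ->] Sn_bij.
have A_lin := F'_lin (th n.+1) q; have AH_lin := lin_adj_F' n.+1.
split.
- exact (lin_kalman_cov A_lin AH_lin R_lin B_lin Sn_bij).
- move=> x; rewrite partial_normal_opS.
  exact: (kalman_cov_rinv A_lin R_bij Sn_bij (lin_partial_normal_op n) BK).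
- rewrite (kalman_mean_update A_lin AH_lin R_lin B_lin R_bij Sn_bij).
  by rewrite partial_normal_rhsS.
Qed.

Lemma adj_F'vec v :
  adj ipX (ipN ipY) (F'vec F' N th q) v = \sum_(j < N) AH j.+1 (v j).
Proof. exact (adj_unique ipXP (is_adjoint_stack ipXP (fun j => adjP (F'_adj _ _))) v). Qed.

Lemma flm_normal_opE m : flm_normal_op ipX ipY F' R N th a q m = partial_normal_op N m.
Proof.
by rewrite /flm_normal_op adj_F'vec; congr (_ + _); apply: eq_bigr => j _; rewrite !ffunE.
Qed.

Lemma kfl_inner_flm_step : bijective (flm_normal_op ipX ipY F' R N th a q) ->
  (kfl_inner ipX ipY F F' R th u q a N).1 = flm_step ipX ipY F F' R N th u a q.
Proof.
move=> M_bij; have := kfl_inner_invariant (leqnn N).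
case: kfl_inner => qN B /= [_ BK ->].
have BK' : cancel B (flm_normal_op ipX ipY F' R N th a q).
  by move=> x; rewrite flm_normal_opE.
rewrite /flm_step (inv_op_rinv M_bij BK') adj_F'vec; congr (_ + B _).
by apply: eq_bigr => j _; rewrite !ffunE.
Qed.

End KflInner.

Theorem theorem3p1
  (K : numClosedFieldType) (X Y : lmodType K)
  (ipX : X -> X -> K) (ipY : Y -> Y -> K)
  (Th : Type) (F : Th -> X -> Y) (F' : Th -> X -> X -> Y)
  (R : Y -> Y) (N : nat) (th : nat -> Th) (u : nat -> Y)
  (q0 : X) (alpha : nat -> K) :
  (* Hilbert-space structure of L^2(Q) and L^2(S^1) *)
  inner_product ipX -> inner_product ipY ->
  (* R : bounded, self-adjoint, positive definite, invertible linear operator *)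
  lin R ->
  (exists c : K, 0 <= c /\ forall y : Y, ipY (R y) (R y) <= c * ipY y y) ->
  is_adjoint ipY ipY R R ->
  (forall y : Y, y != 0 -> 0 < ipY (R y) y) ->
  bijective R ->
  (* derivatives F'_theta[q] : bounded linear operators, having adjoints *)
  (forall t q, lin (F' t q)) ->
  (forall t q, exists AH, is_adjoint ipX ipY (F' t q) AH) ->
  (* positive regularization parameters *)
  (forall i, 0 < alpha i) ->
  (* well-definedness of both iterations: the inverted operators are invertible *)
  (forall i, bijective (flm_normal_op ipX ipY F' R N th (alpha i)
                          (flm ipX ipY F F' R N th u q0 alpha i))) ->
  (forall i n, (1 <= n <= N)%N ->
     bijective (kfl_S ipX ipY F' R th (kfl_start ipX ipY F F' R N th u q0 alpha i) n
                  (kfl_B ipX ipY F F' R N th u q0 alpha i n.-1))) ->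
  forall i : nat,
    kfl ipX ipY F F' R N th u q0 alpha i N = flm ipX ipY F F' R N th u q0 alpha i.+1.
Proof.
move=> ipXP ipYP R_lin _ _ _ R_bij F'_lin F'_adj alpha_gt0 M_bij S_bij.
have kfl_start_flm i : kfl_start ipX ipY F F' R N th u q0 alpha i
                       = flm ipX ipY F F' R N th u q0 alpha i.
  elim: i => [|i IH] //=.
  have := S_bij i; rewrite /kfl_B IH => Si_bij.
  exact (kfl_inner_flm_step ipXP ipYP R_lin R_bij F'_lin F'_adj
           (lt0r_neq0 (alpha_gt0 i)) Si_bij (M_bij i)).
by move=> i; apply: kfl_start_flm i.+1.
Qed.
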